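(* Let $X$ be a locally compact Polish space and $\{B_i\}_{i\in\mathbb{N}}$ a sequence of experiments in $X$. Let $\mathcal{V}$ be a compact set of continuous functions $X\to\mathbb{R}$ in the topology of uniform convergence on compact sets, and let $\Phi(\mathcal{V})$ be the set of preferences $\succeq_u$ (defined by $x\succeq_u y$ iff $u(x)\ge u(y)$) for $u\in\mathcal{V}$. Suppose every $\succeq\in\Phi(\mathcal{V})$ is locally strict. Let $c$ be a choice sequence and, for each $k$, let $\succeq_k\in\Phi(\mathcal{V})$ weakly rationalize the restriction of $c$ to $\Sigma_k$. Then there is $\succeq^*\in\Phi(\mathcal{V})$ with $\succeq_k\to\succeq^*$ in the topology of closed convergence. Furthermore, if $\succeq'_k\in\Phi(\mathcal{V})$ also weakly rationalizes the restriction of $c$ to $\Sigma_k$ for each $k$, then $\succeq'_k\to\succeq^*$.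
   Context: A preference $\succeq$ is locally strict if for all $x\succeq y$ and every neighborhood $V$ of $(x,y)$ in $X\times X$ there is $(x',y')\in V$ with $x'\succ y'$. A sequence of experiments is a sequence $\{B_i\}$ of unordered pairs $B_i\subseteq X$ such that $B=\bigcup_iB_i$ is dense in $X$ and for all $x,y\in B$ there is $k$ with $B_k=\{x,y\}$; $\Sigma_k=\{B_1,\dots,B_k\}$. A choice sequence is a map $c$ assigning to each $B_i$ a nonempty subset $c(B_i)\subseteq B_i$. With $c_{\succeq}(A)=\{x\in A:x\succeq y\ \forall y\in A\}$, $\succeq$ weakly rationalizes $c$ on $\Sigma_k$ if $c(B_i)\subseteq c_{\succeq}(B_i)$ for all $B_i\in\Sigma_k$. Closed convergence on closed subsets of $X\times X$: $F^n\to F$ iff $F$ equals both the set of points every neighborhood of which meets $F^n$ for all large $n$, and the set of points every neighborhood of which meets $F^n$ for infinitely many $n$. *)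

From HB Require Import structures.
From mathcomp Require Import all_boot all_order all_algebra.
From mathcomp Require Import all_classical all_reals all_analysis.
Set Implicit Arguments. Unset Strict Implicit. Unset Printing Implicit Defensive.
Import Order.TTheory GRing.Theory Num.Theory.
Import numFieldNormedType.Exports.
Local Open Scope classical_set_scope.
Local Open Scope ring_scope.

Definition loc_compact (X : topologicalType) : Prop :=
  forall x : X, exists K : set X, nbhs x K /\ compact K.

Definition separable_space (X : topologicalType) : Prop :=
  exists D : set X, countable D /\ dense D.

Definition completely_metrizable (R : realType) (X : topologicalType) : Prop :=
  exists d : X -> X -> R,
    (forall x y, 0 <= d x y) /\
        (forall x y, d x y = 0 <-> x = y) /\
        (forall x y, d x y = d y x) /\
        (forall x y z, d x z <= d x y + d y z) /\
        (forall A : set X, open A <->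
            (forall x, A x -> exists e : R, 0 < e /\ [set y | d x y < e] `<=` A)) /\
        (forall u : nat -> X,
            (forall e : R, 0 < e -> exists N : nat, forall m n, (N <= m)%N -> (N <= n)%N ->
                 d (u m) (u n) < e) ->
            exists l : X, forall e : R, 0 < e -> exists N : nat, forall n, (N <= n)%N ->
                 d (u n) l < e).

Definition polish (R : realType) (X : topologicalType) : Prop :=
  separable_space X /\ completely_metrizable R X.

(** Preferences are relations, i.e. subsets of X x X ((x,y) in P means x >= y). *)
Definition strict_pref (X : Type) (P : set (X * X)) (x y : X) : Prop :=
  P (x, y) /\ ~ P (y, x).

Definition locally_strict (X : topologicalType) (P : set (X * X)) : Prop :=
  forall x y : X, P (x, y) ->
    forall V : set (X * X), nbhs (x, y) V ->
      exists p : X * X, V p /\ strict_pref P p.1 p.2.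

Definition pref_of (X : Type) (R : realType) (u : X -> R) : set (X * X) :=
  [set p | u p.2 <= u p.1].

(** The unordered pair B_i represented by an ordered pair. *)
Definition upair (X : Type) (b : X * X) : set X := [set b.1; b.2].

Definition experiments (X : topologicalType) (B : nat -> X * X) : Prop :=
  dense (\bigcup_i upair (B i)) /\
  forall x y : X, (\bigcup_i upair (B i)) x -> (\bigcup_i upair (B i)) y ->
    exists k : nat, upair (B k) = [set x; y].

Definition choice_seq (X : Type) (B : nat -> X * X) (c : set X -> set X) : Prop :=
  forall i, c (upair (B i)) !=set0 /\ c (upair (B i)) `<=` upair (B i).

Definition choice_of (X : Type) (P : set (X * X)) (A : set X) : set X :=
  [set x | A x /\ forall y, A y -> P (x, y)].

(** P weakly rationalizes c on Sigma_k = {B_0, ..., B_k}. *)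
Definition weakly_rationalizes (X : Type) (P : set (X * X)) (B : nat -> X * X)
    (c : set X -> set X) (k : nat) : Prop :=
  forall i, (i <= k)%N -> c (upair (B i)) `<=` choice_of P (upair (B i)).

Definition lim_inf_set (T : topologicalType) (F : nat -> set T) : set T :=
  [set p | forall V, nbhs p V -> exists N, forall n, (N <= n)%N -> F n `&` V !=set0].

Definition lim_sup_set (T : topologicalType) (F : nat -> set T) : set T :=
  [set p | forall V, nbhs p V -> forall N, exists2 n, (N <= n)%N & F n `&` V !=set0].

Definition closed_converges (T : topologicalType) (F : nat -> set T) (G : set T) : Prop :=
  G = lim_inf_set F /\ G = lim_sup_set F.

(* Two continuous utilities that both rationalize the whole choice sequence,
   one of them locally strict, induce the same preference: a strict
   disagreement at some pair persists, by local strictness and continuity, on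
   a neighbourhood of that pair, and by density it then shows up at a pair that
   is itself an experiment, where the observed choice must agree with both.
   Since u_k rationalizes Sigma_k, every cluster point of (u_k) along a filter
   containing the tails rationalizes all of c; by compactness of V such cluster
   points exist, and they all induce one preference >=*. A point of >=* missing
   from the lim inf, or a point of the lim sup missing from >=*, would produce
   such a cluster point, along the indices witnessing the failure, whose
   preference differs from >=*; the second case uses local compactness of X to
   make evaluation jointly continuous. *)

From Pilot Require Import Defs.
From mathcomp Require Import all_boot all_order all_algebra.
From mathcomp Require Import all_classical all_reals all_analysis.
From mathcomp Require Import lra.
Import Order.TTheory GRing.Theory Num.Theory.
Import numFieldNormedType.Exports.
Local Open Scope classical_set_scope.
Local Open Scope ring_scope.

Lemma dense_nbhsI {T : topologicalType} {S A : set T} {x : T} :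
  dense S -> nbhs x A -> A `&` S !=set0.
Proof.
move=> dS; rewrite nbhsE; case=> O [oO Ox] OA.
have [z [Oz Sz]] := dS O (ex_intro _ x Ox) oO.
by exists z; split => //; apply: OA.
Qed.

(* [Defs.] is needed: MathComp-Analysis has its own [lim_inf_set]. *)
Lemma lim_inf_sub_lim_sup (T : topologicalType) (F : nat -> set T) :
  Defs.lim_inf_set F `<=` Defs.lim_sup_set F.
Proof.
move=> p Fp W pW N; have [M FW] := Fp W pW.
by exists (maxn M N); [exact: leq_maxr | apply: FW; exact: leq_maxl].
Qed.

Lemma compact_cluster_seq {T : topologicalType} {V : set T} {u : nat -> T}
    (G : set_system nat) : ProperFilter G -> compact V -> (forall n, V (u n)) ->
  exists2 w, V w & cluster (u @ G) w.
Proof.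
move=> PG cV Vu.
by have [w [Vw uGw]] := cV (u @ G) _ (nearW _ Vu); exists w.
Qed.

Lemma cluster_seq_meets {T : topologicalType} {u : nat -> T} {G : set_system nat}
    {FG : Filter G} {w : T} {S : set nat} {U : set T} :
  cluster (u @ G) w -> G S -> nbhs w U -> exists2 n, S n & U (u n).
Proof.
move=> uGw GS wU.
have uS : (u @ G) (u @` S) by exact: filterS (@preimage_image _ _ u S) GS.
by have [_ [[n Sn <-] Uun]] := uGw _ _ uS wU; exists n.
Qed.

Section FrequentlyFilter.
Context {I : Type}.
Variables (D : set I) (S : I -> set nat).

Definition frequently_filter : set_system nat :=
  filter_from [set iN : I * nat | D iN.1] (fun iN => S iN.1 `&` [set n | (iN.2 <= n)%N]).

Hypothesis D_neq0 : D !=set0.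
Hypothesis S_directed : forall {i j}, D i -> D j -> exists2 k, D k & S k `<=` S i `&` S j.
Hypothesis S_infinite : forall {i}, D i -> forall N, exists2 n, (N <= n)%N & S i n.

Lemma frequently_filter_proper : ProperFilter frequently_filter.
Proof.
apply: filter_from_proper => [|[i N] /= Di]; last first.
  by have [n Nn Sin] := S_infinite Di N; exists n.
have [i0 Di0] := D_neq0; apply: filter_from_filter; first by exists (i0, 0%N).
move=> [i M] [j N] /= Di Dj; have [k Dk Sk] := S_directed Di Dj.
exists (k, maxn M N) => // n [/Sk[Sin Sjn]] /=; rewrite geq_max => /andP[Mn Nn].
by split.
Qed.

Lemma frequently_filter_tail N : frequently_filter [set n | (N <= n)%N].
Proof. by have [i0 Di0] := D_neq0; exists (i0, N) => // n []. Qed.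

Lemma frequently_filterS {i} : D i -> frequently_filter (S i).
Proof. by move=> Di; exists (i, 0%N) => // n []. Qed.

End FrequentlyFilter.

Section CompactConvergence.
Context {R : realType} {X : topologicalType}.

Lemma nbhs_family_compact_dist (w : {family compact, X -> R}) {K : set X} {e : R} :
  compact K -> 0 < e ->
  nbhs w [set f : {family compact, X -> R} | forall z, K z -> `|w z - f z| < e].
Proof.
move=> cK e0; have := fam_nbhs w (entourage_ball R^o (PosNum e0)) cK.
by apply: filterS => f wf z Kz; have := wf z Kz; rewrite -ball_normE.
Qed.

Lemma nbhs_family_compact_lt {w : {family compact, X -> R}} {x y : X} :
  w x < w y -> \forall f \near w, f x < f y.
Proof.
move=> wxy; have e0 : 0 < (w y - w x) / 2 by lra.
have cxy : compact [set x; y] by apply: compactU; exact: compact_set1.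
have := nbhs_family_compact_dist w cxy e0; apply: filterS => f wf.
have := wf x (or_introl erefl); have := wf y (or_intror erefl).
rewrite !ltr_norml; lra.
Qed.

Lemma nbhs_family_compact_lt_jointly {w : {family compact, X -> R}} {a b : X} :
  loc_compact X -> continuous w -> w a < w b ->
  exists2 W : set (X * X), nbhs (a, b) W &
    \forall f \near w, forall p, W p -> f p.1 < f p.2.
Proof.
move=> lcX cw wab; set e := (w b - w a) / 4; have e0 : 0 < e by rewrite /e; lra.
have [Ka [aKa cKa]] := lcX a; have [Kb [bKb cKb]] := lcX b.
pose near_w z := [set t | `|w z - w t| < e].
have nbhs_near_w z : nbhs z (near_w z) by move/cvgrPdist_lt: (cw z) => /(_ e e0).
exists ((Ka `&` near_w a) `*` (Kb `&` near_w b)).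
  by exists (Ka `&` near_w a, Kb `&` near_w b) => //; split; exact: filterI.
have := nbhs_family_compact_dist w (compactU cKa cKb) e0.
apply: filterS => f wf [x y] [/= [Kax wax] [Kby wby]].
have := wf x (or_introl Kax); have := wf y (or_intror Kby).
move: wax wby; rewrite /near_w /= !ltr_norml /e; lra.
Qed.

End CompactConvergence.

Section Rationalization.
Context {R : realType} {X : topologicalType}.
Variables (B : nat -> X * X) (c : set X -> set X).
Hypotheses (hB : experiments B) (hc : choice_seq B c).

Definition rationalizes (P : set (X * X)) :=
  forall i, c (upair (B i)) `<=` choice_of P (upair (B i)).

Lemma rationalizes_pair_agree {P Q : set (X * X)} {k : nat} {x y : X} :
  upair (B k) = [set x; y] -> rationalizes P -> rationalizes Q ->
  (P (x, y) /\ Q (x, y)) \/ (P (y, x) /\ Q (y, x)).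
Proof.
move=> Bk rP rQ; have [z cz] := (hc k).1.
have [_ Pz] := rP k z cz; have [_ Qz] := rQ k z cz; rewrite Bk in Pz Qz.
move: Pz Qz; have := (hc k).2 z cz; rewrite Bk => -[] -> Pz Qz.
- by left; split; [apply: Pz | apply: Qz]; right.
- by right; split; [apply: Pz | apply: Qz]; left.
Qed.

Lemma rationalizes_no_strict_reversal {f g : X -> R} {x y : X} :
  continuous f -> continuous g ->
  rationalizes (pref_of f) -> rationalizes (pref_of g) ->
  f y < f x -> g x < g y -> False.
Proof.
move=> cf cg rf rg fyx gxy.
set mf := (f x + f y) / 2; set mg := (g x + g y) / 2.
have near_x : \forall z \near x, mf < f z /\ g z < mg.
  by apply: filterI; [apply: cvgr_gt (cf x) _ _ | apply: cvgr_lt (cg x) _ _];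
    rewrite /mf /mg; lra.
have near_y : \forall z \near y, f z < mf /\ mg < g z.
  by apply: filterI; [apply: cvgr_lt (cf y) _ _ | apply: cvgr_gt (cg y) _ _];
    rewrite /mf /mg; lra.
have [z [[fz gz] Bz]] := dense_nbhsI hB.1 near_x.
have [z' [[fz' gz'] Bz']] := dense_nbhsI hB.1 near_y.
have [k Bk] := hB.2 z z' Bz Bz'.
by case: (rationalizes_pair_agree Bk rf rg); rewrite /pref_of /= => -[]; lra.
Qed.

Lemma rationalizes_pref_sub {f g : X -> R} :
  continuous f -> continuous g -> locally_strict (pref_of f) ->
  rationalizes (pref_of f) -> rationalizes (pref_of g) -> pref_of f `<=` pref_of g.
Proof.
move=> cf cg lsf rf rg [a b] fab; rewrite /pref_of /= leNgt; apply/negP => gab.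
set m := (g a + g b) / 2.
have ab_near : nbhs (a, b) ([set z | g z < m] `*` [set z | m < g z]).
  by exists ([set z | g z < m], [set z | m < g z]) => //; split;
    [apply: cvgr_lt (cg a) _ _ | apply: cvgr_gt (cg b) _ _]; rewrite /m; lra.
have [[x y] [[/= gx gy] [/= fyx nfxy]]] := lsf a b fab _ ab_near.
apply: (rationalizes_no_strict_reversal cf cg rf rg _ (lt_trans gx gy)).
by rewrite ltNge; apply/negP.
Qed.

Lemma cluster_rationalizes {u : nat -> {family compact, X -> R}}
    {G : set_system nat} {FG : Filter G} {w : {family compact, X -> R}} :
  (forall k, weakly_rationalizes (pref_of (u k : X -> R)) B c k) ->
  (forall N, G [set n | (N <= n)%N]) -> cluster (u @ G) w ->
  rationalizes (pref_of (w : X -> R)).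
Proof.
move=> ru Gtail uGw i x cx; split; first exact: (hc i).2.
move=> y Bi_y; rewrite /pref_of /= leNgt; apply/negP => wxy.
have [n /= iN unxy] := cluster_seq_meets uGw (Gtail i) (nbhs_family_compact_lt wxy).
have [_ /(_ y Bi_y)] := ru n i iN x cx; rewrite /pref_of /=; lra.
Qed.

End Rationalization.

Section ClosedConvergence.
Context {R : realType} {X : topologicalType} {B : nat -> X * X} {c : set X -> set X}.
Context {V : set {family compact, X -> R}}.
Hypotheses (hlc : loc_compact X) (hB : experiments B) (hc : choice_seq B c).
Hypotheses (hVcont : forall v, V v -> continuous (v : X -> R)) (hVcpt : compact V).
Hypothesis hVls : forall v, V v -> locally_strict (pref_of (v : X -> R)).
Context {us : {family compact, X -> R}}.
Hypotheses (Vus : V us) (rus : rationalizes B c (pref_of (us : X -> R))).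
Context {u : nat -> {family compact, X -> R}}.
Hypothesis hu : forall k, V (u k) /\ weakly_rationalizes (pref_of (u k : X -> R)) B c k.

Let P k := pref_of (u k : X -> R).

Lemma rationalizes_pref_eq (w : {family compact, X -> R}) :
  V w -> rationalizes B c (pref_of (w : X -> R)) ->
  pref_of (w : X -> R) = pref_of (us : X -> R).
Proof.
move=> Vw rw; apply/seteqP; split; apply: (rationalizes_pref_sub _ _ hB hc) => //;
  by [apply: hVcont | apply: hVls].
Qed.

Lemma cluster_pref_eq {G : set_system nat} {PG : ProperFilter G} :
  (forall N, G [set n | (N <= n)%N]) ->
  exists2 w, V w /\ pref_of (w : X -> R) = pref_of (us : X -> R) & cluster (u @ G) w.
Proof.
move=> Gtail; have [w Vw uGw] := compact_cluster_seq G _ hVcpt (fun k => (hu k).1).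
exists w => //; split => //; apply: rationalizes_pref_eq Vw _.
exact: (cluster_rationalizes _ _ hc (fun k => (hu k).2) Gtail uGw).
Qed.

Lemma pref_sub_lim_inf : pref_of (us : X -> R) `<=` Defs.lim_inf_set P.
Proof.
move=> [a b] ab W abW; apply: contrapT => noW.
pose S (_ : unit) := [set n | ~ (P n `&` W !=set0)].
have S_inf N : exists2 n, (N <= n)%N & S tt n.
  apply: contrapT => /forall2NP Sfin; apply: noW; exists N => n Nn.
  by have [//|] := Sfin n; move/contrapT.
have PG : ProperFilter (frequently_filter [set: unit] S).
  by apply: frequently_filter_proper => [|[] [] _ _|[] _]; [exists tt | exists tt |].
have [w [Vw wE] uGw] :=
  cluster_pref_eq (frequently_filter_tail [set: unit] S (ex_intro _ tt I)).
have [[x y] [Wxy [_ /= nyx]]] := hVls _ Vus _ _ ab _ abW.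
have wyx : w y < w x.
  by rewrite ltNge; apply/negP => wxy; apply: nyx; rewrite -wE.
have Stt := frequently_filterS [set: unit] S (I : [set: unit] tt).
have [n /= Sn unyx] := cluster_seq_meets uGw Stt (nbhs_family_compact_lt wyx).
by apply: Sn; exists (x, y); split => //; rewrite /P /pref_of /=; exact: ltW.
Qed.

Lemma lim_sup_sub_pref : Defs.lim_sup_set P `<=` pref_of (us : X -> R).
Proof.
move=> [a b] abP; rewrite /pref_of /= leNgt; apply/negP => usab.
pose S W := [set n | P n `&` W !=set0].
have PG : ProperFilter (frequently_filter (nbhs (a, b)) S).
  apply: frequently_filter_proper => [|W1 W2 abW1 abW2|W abW N].
  - by exists setT; exact: filterT.
  - exists (W1 `&` W2); first exact: filterI.
    by move=> n [p [Pp [W1p W2p]]]; split; exists p.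
  - exact: abP.
have [w [Vw wE] uGw] :=
  cluster_pref_eq (frequently_filter_tail (nbhs (a, b)) S (ex_intro _ _ filterT)).
have wab : w a < w b.
  rewrite ltNge; apply/negP => wba.
  have : pref_of (us : X -> R) (a, b) by rewrite -wE.
  by rewrite /pref_of /= leNgt usab.
have [W abW wW] := nbhs_family_compact_lt_jointly hlc (hVcont _ Vw) wab.
have SW := frequently_filterS (nbhs (a, b)) S abW.
have [n [[x y] [Pxy Wxy]] unW] := cluster_seq_meets uGw SW wW.
by move: Pxy (unW _ Wxy); rewrite /P /pref_of /=; lra.
Qed.

Lemma closed_converges_pref : closed_converges P (pref_of (us : X -> R)).
Proof.
have inf_sup := @lim_inf_sub_lim_sup _ P.
split; apply/seteqP; split.
- exact: pref_sub_lim_inf.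
- by move=> p /inf_sup /lim_sup_sub_pref.
- by move=> p /pref_sub_lim_inf /inf_sup.
- exact: lim_sup_sub_pref.
Qed.

End ClosedConvergence.

Theorem theorem11 (R : realType) (X : topologicalType)
  (hpol : polish R X) (hlc : loc_compact X)
  (B : nat -> X * X) (hB : experiments B)
  (V : set {family compact, X -> R})
  (hVcont : forall u, V u -> continuous (u : X -> R))
  (hVcpt : compact V)
  (hVls : forall u, V u -> locally_strict (pref_of (u : X -> R)))
  (c : set X -> set X) (hc : choice_seq B c)
  (u : nat -> {family compact, X -> R})
  (hu : forall k, V (u k) /\ weakly_rationalizes (pref_of (u k : X -> R)) B c k) :
  exists2 ustar : {family compact, X -> R}, V ustar &
    closed_converges (fun k => pref_of (u k : X -> R)) (pref_of (ustar : X -> R)) /\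
    (forall u' : nat -> {family compact, X -> R},
       (forall k, V (u' k) /\ weakly_rationalizes (pref_of (u' k : X -> R)) B c k) ->
       closed_converges (fun k => pref_of (u' k : X -> R)) (pref_of (ustar : X -> R))).
Proof.
have [w Vw uw] := compact_cluster_seq eventually _ hVcpt (fun k => (hu k).1).
have rw : rationalizes B c (pref_of (w : X -> R)).
  by apply: (cluster_rationalizes _ _ hc (fun k => (hu k).2) _ uw) => N; exists N.
have conv := closed_converges_pref hlc hB hc hVcont hVcpt hVls Vw rw.
by exists w => //; split => [|u' hu']; apply: conv.
Qed.
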